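(* If a series $\sum u_n$ of fuzzy numbers converges to a fuzzy number $\nu$, then it is $E_p$ summable to $\nu$.
   Context: $E^1$ denotes the space of fuzzy numbers (normal, fuzzy convex, upper semi-continuous fuzzy sets on $\mathbb{R}$ with compact support), with addition and scalar multiplication defined levelwise on $\alpha$-level sets $[u]_\alpha=[u^-_\alpha,u^+_\alpha]$, and metric $D(u,v)=\sup_{\alpha\in[0,1]}\max\{|u^-_\alpha-v^-_\alpha|,|u^+_\alpha-v^+_\alpha|\}$. For a series $\sum u_n$ of fuzzy numbers let $s_n=\sum_{k=0}^n u_k$; the series converges to $\nu\in E^1$ if $D(s_n,\nu)\to 0$. For $p>0$, a sequence $(s_n)$ of fuzzy numbers has Euler means $t^p_n=\frac{1}{(p+1)^n}\sum_{k=0}^n\binom{n}{k}p^{n-k}s_k$, and is $E_p$ summable to $\nu$ if $t^p_n\to\nu$ in $D$. A series $\sum u_n$ of fuzzy numbers is $E_p$ summable to $\nu$ if its sequence of partial sums $(s_n)$ is $E_p$ summable to $\nu$. *)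

From HB Require Import structures.
From mathcomp Require Import all_boot all_order all_algebra.
From mathcomp Require Import all_classical all_reals all_analysis.
Set Implicit Arguments. Unset Strict Implicit. Unset Printing Implicit Defensive.
Import Order.TTheory GRing.Theory Num.Theory.
Import numFieldNormedType.Exports.
Local Open Scope classical_set_scope.
Local Open Scope ring_scope.

Record fuzzy (R : realType) := Fuzzy {
  memb : R -> R;
  memb_range : forall x, 0 <= memb x <= 1;
  memb_normal : exists x, memb x = 1;
  memb_convex : forall x y (l : R), 0 <= l <= 1 ->
      Num.min (memb x) (memb y) <= memb (l * x + (1 - l) * y);
  memb_usc : forall a : R, closed [set x | a <= memb x];
  memb_supp : compact (closure [set x | 0 < memb x])
}.

Definition level (R : realType) (u : fuzzy R) (a : R) : set R :=
  if a == 0 then closure [set x | 0 < memb u x] else [set x | a <= memb u x].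

Definition lo (R : realType) (u : fuzzy R) (a : R) : R := inf (level u a).
Definition up (R : realType) (u : fuzzy R) (a : R) : R := sup (level u a).

Definition D (R : realType) (u v : fuzzy R) : R :=
  sup [set d | exists a : R, 0 <= a <= 1 /\
        d = Num.max `|lo u a - lo v a| `|up u a - up v a| ].

Definition lincomb_level (R : realType) (n : nat) (c : nat -> R)
    (v : nat -> fuzzy R) (a : R) : set R :=
  [set y | exists x : nat -> R,
     (forall k, (k <= n)%N -> level (v k) a (x k)) /\
     y = \sum_(k < n.+1) c k * x k].

(* w is the fuzzy number sum_{k=0}^n c_k v_k, operations defined levelwise *)
Definition is_lincomb (R : realType) (w : fuzzy R) (n : nat) (c : nat -> R)
    (v : nat -> fuzzy R) : Prop :=
  forall a : R, 0 <= a <= 1 -> level w a = lincomb_level n c v a.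

Definition partial_sums (R : realType) (u s : nat -> fuzzy R) : Prop :=
  forall n, is_lincomb (s n) n (fun _ => 1) u.

Definition euler_means (R : realType) (p : R) (s t : nat -> fuzzy R) : Prop :=
  forall n, is_lincomb (t n) n
    (fun k => 'C(n, k)%:R * p ^+ (n - k) / (p + 1) ^+ n) s.

Definition Dconv (R : realType) (s : nat -> fuzzy R) (nu : fuzzy R) : Prop :=
  (fun n => D (s n) nu) @ \oo --> (0 : R).

Definition series_conv (R : realType) (u : nat -> fuzzy R) (nu : fuzzy R) :=
  forall s, partial_sums u s -> Dconv s nu.

Definition series_Ep_summable (R : realType) (p : R) (u : nat -> fuzzy R)
    (nu : fuzzy R) :=
  forall s t, partial_sums u s -> euler_means p s t -> Dconv t nu.

From HB Require Import structures.
From mathcomp Require Import all_boot all_order all_algebra.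
From mathcomp Require Import all_classical all_reals all_analysis.
From mathcomp Require Import ring.
Set Implicit Arguments. Unset Strict Implicit. Unset Printing Implicit Defensive.
Import Order.TTheory GRing.Theory Num.Theory.
Import numFieldNormedType.Exports.
Local Open Scope classical_set_scope.
Local Open Scope ring_scope.

(** Levelwise, the endpoints of t_n are the Euler means of the endpoints of
  s_n, so by the triangle inequality D(t_n, nu) <= sum_k c_{n,k} D(s_k, nu)
  with the Euler weights c_{n,k} = C(n,k) p^(n-k) / (p+1)^n.  These weights
  are nonnegative, sum to 1 along each row and tend to 0 along each column
  (c_{n,k} (n - k) <= p (k + 1)), so by the Toeplitz argument the weighted
  means of the null sequence D(s_k, nu) tend to 0. *)

Section closed_bounded.
Variable R : realType.
Implicit Types A : set R.

Lemma closed_sup_in A : A !=set0 -> closed A -> has_ubound A -> A (sup A).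
Proof. by move=> A0 /closure_id {2}-> Aub; exact: closure_sup. Qed.

Lemma closed_inf_in A : A !=set0 -> closed A -> has_lbound A -> A (inf A).
Proof.
move=> /nonemptyN A0 /closedN cA /has_lb_ubN Alb.
by rewrite /inf; have [y Ay <-] := closed_sup_in A0 cA Alb; rewrite opprK.
Qed.

End closed_bounded.

Lemma ler_norm_convex_combB (R : numDomainType) (I : finType) (c x : I -> R)
    (y : R) : (forall i, 0 <= c i) -> \sum_i c i = 1 ->
  `|\sum_i c i * x i - y| <= \sum_i c i * `|x i - y|.
Proof.
move=> c_ge0 c_sum1; rewrite -[y in _ - y]mul1r -c_sum1 mulr_suml -sumrB.
apply: le_trans (ler_norm_sum _ _ _) _; apply: ler_sum => i _.
by rewrite -mulrBr normrM ger0_norm.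
Qed.

Section fuzzy_endpoints.
Variable R : realType.
Implicit Types (u v w : fuzzy R) (a : R).

Lemma level_sub_supp u a :
  0 <= a -> level u a `<=` closure [set x | 0 < memb u x].
Proof.
rewrite /level; case: eqP => [_ _ //|/eqP a_neq0 a_ge0] x /= ax.
apply: subset_closure; apply: lt_le_trans ax.
by rewrite lt_neqAle eq_sym a_neq0.
Qed.

Lemma level_neq0 u a : 0 <= a <= 1 -> level u a !=set0.
Proof.
case/andP=> _ a_le1; have [x ux1] := memb_normal u; exists x.
rewrite /level; case: eqP => _ /=; last by rewrite ux1.
by apply: subset_closure; rewrite /= ux1 ltr01.
Qed.

Lemma level_closed u a : closed (level u a).
Proof.
rewrite /level; case: eqP => _; first exact: closed_closure.
exact: (@memb_usc _ u).
Qed.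

Lemma level_bounded u : exists B : R,
  forall a x, 0 <= a -> level u a x -> `|x| <= B.
Proof.
have [M [_ HM]] := compact_bounded (@memb_supp _ u).
by exists (M + 1) => a x a_ge0 /(level_sub_supp a_ge0); apply: HM; rewrite ltrDl.
Qed.

Lemma level_has_lbound u a : 0 <= a -> has_lbound (level u a).
Proof.
have [B HB] := level_bounded u.
by move=> a_ge0; exists (- B) => x /(HB _ _ a_ge0); rewrite ler_norml => /andP[].
Qed.

Lemma level_has_ubound u a : 0 <= a -> has_ubound (level u a).
Proof.
have [B HB] := level_bounded u.
by move=> a_ge0; exists B => x /(HB _ _ a_ge0); rewrite ler_norml => /andP[].
Qed.

Section endpoints.
Variables (a : R) (a01 : 0 <= a <= 1).
Let a_ge0 : 0 <= a. Proof. by case/andP: a01. Qed.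

Lemma lo_in_level u : level u a (lo u a).
Proof.
apply: closed_inf_in; first exact: level_neq0.
  exact: level_closed.
exact: level_has_lbound.
Qed.

Lemma up_in_level u : level u a (up u a).
Proof.
apply: closed_sup_in; first exact: level_neq0.
  exact: level_closed.
exact: level_has_ubound.
Qed.

Lemma lo_le u x : level u a x -> lo u a <= x.
Proof. exact/ge_inf/level_has_lbound. Qed.

Lemma up_ge u x : level u a x -> x <= up u a.
Proof. exact/ub_le_sup/level_has_ubound. Qed.

Variables (n : nat) (c : nat -> R) (v : nat -> fuzzy R).
Hypothesis c_ge0 : forall k, 0 <= c k.

Lemma inf_lincomb_level :
  inf (lincomb_level n c v a) = \sum_(k < n.+1) c k * lo (v k) a.
Proof.
set y := \sum_(k < n.+1) _.
have y_in : lincomb_level n c v a y.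
  by exists (fun k => lo (v k) a); split => // k _; exact: lo_in_level.
have y_lb : lbound (lincomb_level n c v a) y.
  move=> _ [x [x_in ->]]; apply: ler_sum => k _.
  by apply: ler_wpM2l => //; apply: lo_le; exact: x_in (ltn_ord k).
by apply/eqP; rewrite eq_le ge_inf ?lb_le_inf //; [exists y|exists y].
Qed.

Lemma sup_lincomb_level :
  sup (lincomb_level n c v a) = \sum_(k < n.+1) c k * up (v k) a.
Proof.
set y := \sum_(k < n.+1) _.
have y_in : lincomb_level n c v a y.
  by exists (fun k => up (v k) a); split => // k _; exact: up_in_level.
have y_ub : ubound (lincomb_level n c v a) y.
  move=> _ [x [x_in ->]]; apply: ler_sum => k _.
  by apply: ler_wpM2l => //; apply: up_ge; exact: x_in (ltn_ord k).
by apply/eqP; rewrite eq_le ge_sup ?ub_le_sup //; [exists y|exists y].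
Qed.

End endpoints.
End fuzzy_endpoints.

Section metric_D.
Variable R : realType.
Implicit Types (u v w nu : fuzzy R) (a : R).

Lemma endpoint_dist_le_D u v a : 0 <= a <= 1 ->
  Num.max `|lo u a - lo v a| `|up u a - up v a| <= D u v.
Proof.
move=> a01; apply: ub_le_sup; last by exists a.
have [Bu HBu] := level_bounded u; have [Bv HBv] := level_bounded v.
exists (Bu + Bv) => _ [b [b01 ->]]; have /andP[b_ge0 _] := b01.
rewrite ge_max; apply/andP; split; apply: le_trans (ler_normB _ _) _;
  apply: lerD; [exact/(HBu b)/lo_in_level|exact/(HBv b)/lo_in_level|
                exact/(HBu b)/up_in_level|exact/(HBv b)/up_in_level].
Qed.

Lemma D_ge0 u v : 0 <= D u v.
Proof.
apply: le_trans (endpoint_dist_le_D u v (a := 0) _); last by rewrite lexx ler01.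
by rewrite le_max normr_ge0.
Qed.

Lemma ge_D u v M :
  (forall a, 0 <= a <= 1 ->
     Num.max `|lo u a - lo v a| `|up u a - up v a| <= M) ->
  D u v <= M.
Proof.
move=> HM; apply: ge_sup => [|_ [a [a01 ->]]]; last exact: HM.
by eexists; exists 0; split; rewrite ?lexx ?ler01.
Qed.

Section lincomb.
Variables (w : fuzzy R) (n : nat) (c : nat -> R) (v : nat -> fuzzy R).
Hypotheses (wE : is_lincomb w n c v) (c_ge0 : forall k, 0 <= c k).

Lemma lo_lincomb a : 0 <= a <= 1 -> lo w a = \sum_(k < n.+1) c k * lo (v k) a.
Proof. by move=> a01; rewrite /lo wE // inf_lincomb_level. Qed.

Lemma up_lincomb a : 0 <= a <= 1 -> up w a = \sum_(k < n.+1) c k * up (v k) a.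
Proof. by move=> a01; rewrite /up wE // sup_lincomb_level. Qed.

Lemma D_lincomb_le nu : \sum_(k < n.+1) c k = 1 ->
  D w nu <= \sum_(k < n.+1) c k * D (v k) nu.
Proof.
move=> c_sum1; apply: ge_D => a a01.
rewrite lo_lincomb // up_lincomb // ge_max.
apply/andP; split; apply: le_trans (ler_norm_convex_combB _ _ _ _) _ => //;
  apply: ler_sum => k _; apply: ler_wpM2l => //;
  by apply: le_trans (endpoint_dist_le_D _ _ a01); rewrite le_max lexx ?orbT.
Qed.

End lincomb.
End metric_D.

Section weighted_means.
Variables (R : realType) (c : nat -> nat -> R).
Hypotheses (c_ge0 : forall n k, 0 <= c n k)
  (c_sum_le1 : forall n, \sum_(k < n.+1) c n k <= 1)
  (c_col_cvg0 : forall k, c^~ k @ \oo --> 0).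

Lemma weighted_means_cvg0 (e : nat -> R) : e @ \oo --> 0 ->
  (fun n => \sum_(k < n.+1) c n k * e k) @ \oo --> 0.
Proof.
move=> /cvgr0Pnorm_le e0; apply/cvgr0Pnorm_le => eps eps_gt0.
have eps2_gt0 : 0 < eps / 2 by rewrite divr_gt0.
have [K _ e_small] := e0 _ eps2_gt0.
have head0 : (fun n => \sum_(k < K) c n k * e k) @ \oo --> 0.
  suff : (fun n => \sum_(k < K) c n k * e k) @ \oo --> \sum_(k < K) (0 : R).
    by rewrite big1.
  apply: cvg_big => [|k _]; first exact: add_continuous.
  by rewrite -(mul0r (e k)); apply: cvgM; [exact: c_col_cvg0|exact: cvg_cst].
near=> n.
have Kn : (K <= n.+1)%N by apply: leqW; near: n; exact: nbhs_infty_ge.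
rewrite -(big_mkord xpredT (fun k => c n k * e k)).
rewrite (big_cat_nat (leq0n K) Kn) //=.
rewrite big_mkord (splitr eps); apply: le_trans (ler_normD _ _) _; apply: lerD.
  by near: n; move/cvgr0Pnorm_le: head0; apply.
apply: le_trans (ler_norm_sum _ _ _) _.
apply: (le_trans (y := \sum_(0 <= k < n.+1) c n k * (eps / 2))).
  rewrite [X in _ <= X](big_cat_nat (leq0n K) Kn) //=; apply: ler_wpDl.
    by apply: sumr_ge0 => k _; rewrite mulr_ge0 // ltW.
  apply: ler_sum_nat => k /andP[Kk _].
  by rewrite normrM ger0_norm // ler_wpM2l // e_small.
by rewrite -mulr_suml big_mkord ler_piMl // ltW.
Unshelve. all: by end_near. Qed.

End weighted_means.

Section euler_weights.
Variables (R : realType) (p : R).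
Hypothesis p_ge0 : 0 <= p.

Definition euler_weight (n k : nat) : R :=
  'C(n, k)%:R * p ^+ (n - k) / (p + 1) ^+ n.

Let p1_gt0 : 0 < p + 1. Proof. by rewrite ltr_wpDl. Qed.

Lemma euler_weight_ge0 n k : 0 <= euler_weight n k.
Proof. by rewrite /euler_weight !mulr_ge0 // ?invr_ge0 exprn_ge0 // ltW. Qed.

Lemma euler_weight_sum n : \sum_(k < n.+1) euler_weight n k = 1.
Proof.
rewrite /euler_weight -mulr_suml.
have -> : \sum_(k < n.+1) 'C(n, k)%:R * p ^+ (n - k) = (p + 1) ^+ n.
  by rewrite exprDn; apply: eq_bigr => k _; rewrite expr1n mulr1 mulr_natl.
by rewrite divff // expf_neq0 // gt_eqF.
Qed.

Lemma euler_weight_le1 n k : euler_weight n k <= 1.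
Proof.
have [kn|nk] := leqP k n; last first.
  by rewrite /euler_weight bin_small // !mul0r ler01.
rewrite -(euler_weight_sum n) (bigD1 (Ordinal (kn : (k < n.+1)%N))) //= lerDl.
by apply: sumr_ge0 => *; exact: euler_weight_ge0.
Qed.

Lemma euler_weight_mul_sub n k : (k < n)%N ->
  euler_weight n k * (n - k)%:R = p * k.+1%:R * euler_weight n k.+1.
Proof.
move=> kn; rewrite /euler_weight.
have binE : ('C(n, k)%:R * (n - k)%:R : R) = k.+1%:R * 'C(n, k.+1)%:R.
  by rewrite -!natrM mul_bin_left mulnC.
have powE : p ^+ (n - k) = p * p ^+ (n - k.+1) by rewrite -exprS subnSK.
rewrite powE; transitivity
  ('C(n, k)%:R * (n - k)%:R * p * (p ^+ (n - k.+1) / (p + 1) ^+ n)).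
  by ring.
by rewrite binE; ring.
Qed.

Lemma euler_weight_cvg0 k : euler_weight ^~ k @ \oo --> 0.
Proof.
apply/cvgr0Pnorm_le => eps eps_gt0; near=> n.
have kn : (k < n)%N by near: n; exact: nbhs_infty_gt.
have nk_gt0 : 0 < (n - k)%:R :> R by rewrite ltr0n subn_gt0.
rewrite ger0_norm ?euler_weight_ge0 // -(ler_pM2r nk_gt0).
rewrite euler_weight_mul_sub //.
apply: (le_trans (y := p * k.+1%:R)).
  by rewrite ler_piMr ?euler_weight_le1 // mulr_ge0.
rewrite [eps * _]mulrC -ler_pdivrMr // (natrB _ (ltnW kn)) lerBrDr.
near: n; exact: (nbhs_infty_ger (p * k.+1%:R / eps + k%:R)).
Unshelve. all: by end_near. Qed.

End euler_weights.

Theorem mainTheorem1 (R : realType) (p : R) (hp : 0 < p)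
    (u : nat -> fuzzy R) (nu : fuzzy R) :
  series_conv u nu -> series_Ep_summable p u nu.
Proof.
move=> u_cvg s t s_sums t_means; have p_ge0 := ltW hp.
have w_ge0 := euler_weight_ge0 p_ge0.
have w_sum1 := euler_weight_sum p_ge0.
have t_le n : D (t n) nu <= \sum_(k < n.+1) euler_weight p n k * D (s k) nu.
  exact: (D_lincomb_le (t_means n : is_lincomb _ n (euler_weight p n) s) _ nu).
have w_le1 n : \sum_(k < n.+1) euler_weight p n k <= 1 by rewrite w_sum1.
have means_cvg0 := weighted_means_cvg0 w_ge0 w_le1 (euler_weight_cvg0 p_ge0)
  (u_cvg s s_sums).
apply: (squeeze_cvgr _ (cvg_cst 0) means_cvg0).
by apply: nearW => n; rewrite D_ge0 t_le.
Qed.
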